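(* Fix an assignment matrix $A$ for which event $\mathcal A$ holds, and let $Q$ be the $m\times m$ matrix with $Q_{ij}=B_{ij}/d$ for $i\ne j$ and $Q_{ii}=1-\frac1d\sum_{k\ne i}B_{ik}$, where $d=\frac32mnp^2$. Then $Q$ is a symmetric stochastic matrix (reversible with respect to the uniform distribution) and $$\mu^*(Q)\ \ge\ \frac13 .$$
   Context: $A\in\{0,1\}^{n\times m}$ is an assignment matrix ($n$ users, $m\ge2$ items), $p\in(0,1]$, $B=A^\top A$. Event $\mathcal A$: $\frac12np^2\le B_{ij}\le\frac32np^2$ for all $i\ne j\in[m]$. For a stochastic matrix $M$ reversible with respect to a positive probability vector (so its eigenvalues are real, $1=\lambda_1\ge\lambda_2\ge\dots\ge\lambda_m$), the spectral gap is $\mu^*(M)=1-\max\{|\lambda_2|,|\lambda_m|\}$. *)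

From HB Require Import structures.
From mathcomp Require Import all_boot all_order all_algebra.
From mathcomp Require Import reals.
Set Implicit Arguments. Unset Strict Implicit. Unset Printing Implicit Defensive.
Import Order.TTheory GRing.Theory Num.Theory.
Local Open Scope ring_scope.

Definition gram (R : realType) (n m : nat) (A : 'M[R]_(n, m)) : 'M[R]_m :=
  A^T *m A.

Definition Qmat (R : realType) (n m : nat) (p : R) (A : 'M[R]_(n, m)) : 'M[R]_m :=
  let B := gram A in
  let d := 3 / 2 * m%:R * n%:R * p ^+ 2 in
  \matrix_(i, j) (if i == j then 1 - (\sum_(k < m | k != i) B i k) / d
                  else B i j / d).

Definition eventA (R : realType) (n m : nat) (p : R) (A : 'M[R]_(n, m)) : Prop :=
  forall i j : 'I_m, i != j ->
    1 / 2 * n%:R * p ^+ 2 <= gram A i j <= 3 / 2 * n%:R * p ^+ 2.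

Definition stochastic (R : realType) (m : nat) (M : 'M[R]_m) : Prop :=
  (forall i j, 0 <= M i j) /\ (forall i, \sum_j M i j = 1).

Definition symmetric_mx (R : realType) (m : nat) (M : 'M[R]_m) : Prop :=
  M^T = M.

Definition reversible (R : realType) (m : nat) (pi : 'I_m -> R) (M : 'M[R]_m) : Prop :=
  forall i j, pi i * M i j = pi j * M j i.

(* s is the list of eigenvalues of M (with algebraic multiplicity, all real),
   sorted in nonincreasing order: lambda_1 >= ... >= lambda_m. *)
Definition eigvals_sorted (R : realType) (m : nat) (M : 'M[R]_m) (s : seq R) : Prop :=
  sorted (fun x y => y <= x) s /\
  char_poly M = \prod_(x <- s) ('X - x%:P).

(* mu^* = 1 - max(|lambda_2|, |lambda_m|) *)
Definition spectral_gap_of (R : realType) (s : seq R) : R :=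
  1 - Num.max `|s`_1| `|last 0 s|.

From HB Require Import structures.
From mathcomp Require Import all_boot all_order all_algebra.
From mathcomp Require Import reals complex.
From mathcomp Require Import ring lra.
Set Implicit Arguments. Unset Strict Implicit. Unset Printing Implicit Defensive.
Import Order.TTheory GRing.Theory Num.Theory.
Local Open Scope ring_scope.

(* Q is symmetric with unit row sums, and event A makes every entry of Q at
   least c = 1/(3m).  For a doubly stochastic matrix with entries >= c, a left
   eigenvector v with eigenvalue l and coordinates summing to 0 satisfies
   l v_j = sum_i v_i (Q_ij - c), so |l| <= 1 - m c: a Doeblin contraction.
   Subtracting J/m removes exactly the Perron eigenvalue 1, since
   char_poly Q * X = char_poly (Q - J/m) * (X - 1), and every eigenvalue of
   Q - J/m has such an eigenvector.  Hence all eigenvalues of Q but one copy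
   of 1 lie in [-2/3, 2/3].  The spectrum is real by the spectral theorem
   applied to the complexified matrix, which is Hermitian. *)

Lemma char_poly_conj (F : fieldType) n (P A : 'M[F]_n) : P \in unitmx ->
  char_poly (invmx P *m A *m P) = char_poly A.
Proof.
move=> Pu; rewrite /char_poly /char_poly_mx.
have -> : 'X%:M - map_mx polyC (invmx P *m A *m P)
    = map_mx polyC (invmx P) *m ('X%:M - map_mx polyC A) *m map_mx polyC P.
  rewrite mulmxBr mulmxBl !map_mxM; congr (_ - _).
  by rewrite mul_mx_scalar -scalemxAl -map_mxM mulVmx // map_mx1 scalemx1.
by rewrite !det_mulmx mulrC mulrA -det_mulmx -map_mxM mulmxV // map_mx1 det1 mul1r.
Qed.

Lemma map_real_complex_hermsym (R : rcfType) n (A : 'M[R]_n) : A^T = A ->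
  map_mx (real_complex R) A \is hermsymmx.
Proof.
move=> Asym; apply/is_hermitianmxP; rewrite expr0 scale1r.
apply/matrixP => i j; rewrite !mxE -{1}Asym mxE.
by apply/esym/CrealP/complex_realP; exists (A j i).
Qed.

Lemma char_poly_sym_split (R : rcfType) n (A : 'M[R]_n) : A^T = A ->
  exists s : seq R, char_poly A = \prod_(x <- s) ('X - x%:P).
Proof.
move=> /map_real_complex_hermsym AH.
set AC := map_mx (real_complex R) A in AH.
have := hermitian_spectral_diag_real AH; set d := spectral_diag AC => d_real.
exists [seq complex.Re (d 0 i) | i : 'I_n].
apply: (@map_poly_inj _ _ (real_complex R)).
rewrite map_char_poly -/AC.
have /orthomx_spectralP -> := hermitian_normalmx AH.
rewrite char_poly_conj ?spectral_unit // char_poly_trig ?diag_mx_is_trig //.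
rewrite rmorph_prod big_map big_enum /=; apply: eq_bigr => i _.
rewrite map_polyXsubC mxE eqxx mulr1n; congr (_ - _%:P).
by have /complex_realP [r ->] := mxOverP d_real 0 i.
Qed.

Lemma sym_eigvals_sorted (R : realType) m (M : 'M[R]_m) : M^T = M ->
  exists s, eigvals_sorted M s.
Proof.
move=> /char_poly_sym_split [s Ms]; exists (sort (fun x y => y <= x) s); split.
  by apply: sort_sorted => x y; exact: le_total.
by rewrite Ms; apply: perm_big; rewrite perm_sym perm_sort.
Qed.

Lemma det_1Dconst (T : comNzRingType) n (a : T) :
  \det (1%:M + const_mx a : 'M[T]_n) = 1 + n%:R * a.
Proof.
case: n => [|n]; first by rewrite det_mx00 mul0r addr0.
(* The first column of S is the all-ones vector, an eigenvector of const_mx a. *)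
pose S : 'M[T]_n.+1 := \matrix_(i, j) (if j == ord0 then 1 else (i == j)%:R).
pose r : 'M[T]_n.+1 :=
  \matrix_(i, j) (if i == ord0 then (if j == ord0 then n.+1%:R * a else a) else 0).
have S_trig : is_trig_mx S.
  apply/is_trig_mxP => i j ij; rewrite !mxE.
  by rewrite -!val_eqE /= (ltn_eqF ij) (gtn_eqF (leq_ltn_trans (leq0n _) ij)).
have detS : \det S = 1.
  by rewrite det_trig // big1 // => i _; rewrite !mxE eqxx if_same.
have conjS : (1%:M + const_mx a) *m S = S *m (1%:M + r).
  rewrite mulmxDl mulmxDr mul1mx mulmx1; congr (_ + _).
  apply/matrixP => i j; rewrite !mxE [RHS](bigD1 ord0) //= !mxE eqxx mul1r.
  rewrite [X in _ = _ + X]big1 ?addr0 => [|l /negbTE l0]; last by rewrite !mxE l0 mulr0.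
  under eq_bigr do rewrite !mxE.
  have [_|j0] := eqVneq j ord0; first by rewrite sumr_const card_ord mulr1 mulr_natl.
  by rewrite (bigD1 j) //= eqxx mulr1 big1 ?addr0 // => l /negbTE ->; rewrite mulr0.
have := congr1 determinant conjS; rewrite !det_mulmx detS mulr1 mul1r => ->.
rewrite -det_tr det_trig; last first.
  apply/is_trig_mxP => i j ij; rewrite !mxE.
  by rewrite -!val_eqE /= (gtn_eqF ij) (gtn_eqF (leq_ltn_trans (leq0n _) ij)) add0r.
rewrite big_ord_recl !mxE !eqxx big1 ?mulr1 // => i _.
by rewrite !mxE eqxx /= addr0.
Qed.

Lemma mulmx_1Dconst_mxE (T : pzRingType) m n (N : 'M[T]_(m, n)) b i j :
  (N *m (1%:M + const_mx b)) i j = N i j + (\sum_l N i l) * b.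
Proof.
rewrite mulmxDr mulmx1 !mxE mulr_suml; congr (_ + _).
by apply: eq_bigr => l _; rewrite mxE.
Qed.

Lemma char_poly_deflate (F : fieldType) m (Q : 'M[F]_m) :
  m%:R != 0 :> F -> (forall i, \sum_j Q i j = 1) ->
  char_poly Q * 'X = char_poly (Q - const_mx m%:R^-1) * ('X - 1).
Proof.
move=> m0 Qrow; set a := m%:R^-1.
have ma (c : {poly F}) : m%:R * (c * a%:P) = c.
  by rewrite mulrCA -polyC_natr -polyCM mulfV // mulr1.
set M := char_poly_mx Q; set M' := char_poly_mx (Q - const_mx a).
have M'E i j : M' i j = M i j + a%:P.
  by rewrite !mxE rmorphB /= addrAC opprB addrA.
have rowM i : \sum_l M i l = 'X - 1.
  under eq_bigr do rewrite !mxE.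
  rewrite sumrB -rmorph_sum Qrow (bigD1 i) //= eqxx big1 ?addr0 // => l li.
  by rewrite eq_sym (negbTE li).
have rowM' i : \sum_l M' i l = 'X.
  under eq_bigr do rewrite M'E.
  by rewrite big_split /= rowM sumr_const card_ord -mulr_natl -[a%:P]mul1r ma subrK.
(* Both sides equal M + ('X - 1)^2 / m * J. *)
have conj1D : M' *m (1%:M + const_mx (('X - 2%:P) * a%:P))
            = M *m (1%:M + const_mx (('X - 1) * a%:P)).
  apply/matrixP => i j; rewrite !mulmx_1Dconst_mxE rowM rowM' M'E polyC_natr.
  by rewrite -!addrA; congr (_ + _); ring.
have := congr1 determinant conj1D; rewrite !det_mulmx !det_1Dconst !ma.
rewrite -/(char_poly Q) -/(char_poly (Q - const_mx a)).
have -> : 1 + ('X - 2%:P) = 'X - 1 :> {poly F} by rewrite polyC_natr; ring.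
by rewrite [1 + ('X - 1)]addrC subrK => ->.
Qed.

Section DoeblinContraction.
Variables (R : realFieldType) (m : nat) (Q : 'M[R]_m) (c : R).
Hypothesis Qcol : forall j, \sum_i Q i j = 1.
Hypothesis Qge : forall i j, c <= Q i j.

Lemma norm_eigenvalue_sum0_le (v : 'rV[R]_m) l :
  v *m Q = l *: v -> \sum_i v 0 i = 0 -> v != 0 -> `|l| <= 1 - m%:R * c.
Proof.
move=> vQ vsum0 vn0.
have [j0 vj0] : exists j0, v 0 j0 != 0.
  apply/existsP; apply: contraNT vn0 => /existsPn vz.
  by apply/eqP/rowP => j; rewrite mxE; apply/eqP/negPn/vz.
pose j := Order.arg_max j0 xpredT (fun k => `|v 0 k|).
have vmax k : `|v 0 k| <= `|v 0 j| by rewrite /j; case: arg_maxP => //= j1 _; apply.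
have vj_gt0 : 0 < `|v 0 j| by apply: lt_le_trans (vmax j0); rewrite normr_gt0.
have lvj : l * v 0 j = \sum_i v 0 i * (Q i j - c).
  have /rowP/(_ j) := vQ; rewrite !mxE => <-.
  by under [RHS]eq_bigr do rewrite mulrBr; rewrite sumrB -mulr_suml vsum0 mul0r subr0.
rewrite -(ler_pM2r vj_gt0) -normrM lvj.
apply: (le_trans (ler_norm_sum _ _ _)).
apply: (@le_trans _ _ (\sum_i `|v 0 j| * (Q i j - c))).
  apply: ler_sum => i _; rewrite normrM (ger0_norm (_ : 0 <= Q i j - c)) ?subr_ge0 //.
  by rewrite ler_wpM2r ?subr_ge0.
by rewrite -mulr_sumr sumrB Qcol sumr_const card_ord mulr_natl mulrC.
Qed.

Hypothesis Qrow : forall i, \sum_j Q i j = 1.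

Lemma deflated_root_norm_le x : (0 < m)%N ->
  root (char_poly (Q - const_mx m%:R^-1)) x -> `|x| <= 1 - m%:R * c.
Proof.
move=> m_gt0; rewrite -eigenvalue_root_char => /eigenvalueP [v vQ vn0].
have m0 : m%:R != 0 :> R by rewrite pnatr_eq0 -lt0n.
set s := \sum_i v 0 i.
have vQ'E : v *m (Q - const_mx m%:R^-1) = v *m Q - const_mx (s / m%:R).
  apply/rowP => j; rewrite mulmxBr !mxE mulr_suml.
  by congr (_ - _); apply: eq_bigr => i _; rewrite mxE.
have xs0 : x * s = 0.
  transitivity (\sum_j (v *m (Q - const_mx m%:R^-1)) 0 j).
    by rewrite vQ mulr_sumr; apply: eq_bigr => j _; rewrite mxE.
  rewrite vQ'E; under eq_bigr do rewrite !mxE.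
  rewrite sumrB sumr_const card_ord exchange_big /= -[s / _ *+ m]mulr_natr divfK //.
  by under eq_bigr do rewrite -mulr_sumr Qrow mulr1; rewrite subrr.
have [-> | x0] := eqVneq x 0.
  rewrite normr0 subr_ge0 -[X in _ <= X](Qcol (Ordinal m_gt0)).
  apply: le_trans _ (ler_sum _ (fun i _ => Qge i _)).
  by rewrite sumr_const card_ord mulr_natl.
have s0 : s = 0 by apply/eqP; move/eqP: xs0; rewrite mulf_eq0 (negbTE x0).
have vQx : v *m Q = x *: v by rewrite -vQ vQ'E s0 mul0r subr0.
exact: norm_eigenvalue_sum0_le vQx s0 vn0.
Qed.

End DoeblinContraction.

Lemma prod_XsubC_deflate (D : idomainType) (s : seq D) (P : {poly D}) :
  \prod_(x <- s) ('X - x%:P) * 'X = P * ('X - 1) ->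
  1 \in s /\ P = 'X * \prod_(x <- rem 1 s) ('X - x%:P).
Proof.
move=> defP.
have s1 : 1 \in s.
  have /(congr1 (horner^~ 1)) := defP.
  rewrite !hornerM hornerX mulr1 hornerXsubC subrr mulr0 => /rootP.
  by rewrite root_prod_XsubC.
split=> //; have XsubC1_neq0 : 'X - 1 != 0 :> {poly D} by rewrite -polyC1 polyXsubC_eq0.
apply: (mulIf XsubC1_neq0); rewrite -defP (big_rem _ s1) /= polyC1.
by ring.
Qed.

Lemma spectral_gap_of_ge (R : realType) (s : seq R) b :
  sorted (fun x y => y <= x) s -> (1 < size s)%N -> 1 \in s ->
  (forall y, y \in rem 1 s -> `|y| <= b) -> b < 1 -> 1 - b <= spectral_gap_of s.
Proof.
case: s => [//|x0 t] s_sorted size_s s1 rem_le b_lt1.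
have le_x0 : {in t, forall y, y <= x0}.
  by apply/allP/(order_path_min _ s_sorted) => x y z xy yz; apply: le_trans yz xy.
have x0_1 : x0 = 1.
  apply/eqP/negPn/negP => x0_neq1.
  have := rem_le x0; rewrite /= (negbTE x0_neq1) mem_head => /(_ isT) x0_le.
  rewrite inE eq_sym (negbTE x0_neq1) /= in s1.
  have := le_x0 1 s1; have := ler_norm x0; lra.
move: rem_le; rewrite x0_1 /= eqxx.
case: t size_s {s_sorted s1 le_x0} => [//|y t] _ rem_le.
rewrite /spectral_gap_of /= lerD2l lerN2 ge_max.
by rewrite !rem_le ?mem_head ?mem_last.
Qed.

Lemma doubly_stochastic_spectral_gap_ge (R : realType) m (Q : 'M[R]_m) c s :
  (1 < m)%N -> (forall i, \sum_j Q i j = 1) -> (forall j, \sum_i Q i j = 1) ->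
  (forall i j, c <= Q i j) -> 0 < c ->
  eigvals_sorted Q s -> m%:R * c <= spectral_gap_of s.
Proof.
move=> m_gt1 Qrow Qcol Qge c_gt0 [s_sorted defQ].
have m_gt0 : (0 < m)%N by apply: ltnW.
have m0 : m%:R != 0 :> R by rewrite pnatr_eq0 -lt0n.
have := char_poly_deflate m0 Qrow; rewrite defQ => /prod_XsubC_deflate [s1 defP].
have size_s : size s = m.
  by have := size_char_poly Q; rewrite defQ size_prod_XsubC => -[].
have mc_gt0 : 0 < m%:R * c by rewrite mulr_gt0 // ltr0n.
have -> : m%:R * c = 1 - (1 - m%:R * c) by rewrite opprB addrC subrK.
apply: spectral_gap_of_ge => //; rewrite ?size_s ?ltrBlDl ?ltrDr //.
move=> y y_rem; apply: (deflated_root_norm_le Qcol Qge Qrow m_gt0).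
by rewrite defP rootM root_prod_XsubC y_rem orbT.
Qed.

Section Qmat.
Variables (R : realType) (n m : nat) (p : R) (A : 'M[R]_(n, m)).

Lemma Qmat_tr : (Qmat p A)^T = Qmat p A.
Proof.
apply/matrixP => i j; rewrite !mxE eq_sym; case: eqP => [-> //|_].
by congr (_ / _); apply: eq_bigr => k _; rewrite !mxE mulrC.
Qed.

Lemma Qmat_row_sum i : \sum_j Qmat p A i j = 1.
Proof.
rewrite (bigD1 i) //= mxE eqxx.
under eq_bigr => j ji do rewrite mxE eq_sym (negbTE ji).
by rewrite -mulr_suml subrK.
Qed.

Lemma Qmat_ge : (0 < n)%N -> (2 <= m)%N -> 0 < p -> eventA p A ->
  forall i j, 1 / (3 * m%:R) <= Qmat p A i j.
Proof.
move=> n_gt0 m_ge2 p_gt0 HA i j.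
set e := n%:R * p ^+ 2.
have e_gt0 : 0 < e by rewrite mulr_gt0 ?exprn_gt0 ?ltr0n.
have m_gt0 : 0 < m%:R :> R by rewrite ltr0n (leq_trans _ m_ge2).
have d_gt0 : 0 < 3 / 2 * m%:R * e by apply: mulr_gt0 => //; apply: mulr_gt0 => //; lra.
have dE : 3 / 2 * m%:R * n%:R * p ^+ 2 = 3 / 2 * m%:R * e by rewrite /e !mulrA.
have gram_bounds k l : k != l -> e / 2 <= gram A k l <= 3 / 2 * e.
  by move/HA/andP => [lo hi]; apply/andP; split; rewrite /e; lra.
rewrite mxE dE; case: eqP => [_ | /eqP ij]; last first.
  rewrite ler_pdivlMr //.
  have -> : 1 / (3 * m%:R) * (3 / 2 * m%:R * e) = e / 2 by field; rewrite gt_eqF.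
  by case/andP: (gram_bounds _ _ ij).
have sum_le : \sum_(h < m | h != i) gram A i h <= (m%:R - 1) * (3 / 2 * e).
  apply: le_trans (_ : \sum_(h < m | h != i) 3 / 2 * e <= _).
    by apply: ler_sum => h; rewrite eq_sym => /gram_bounds/andP[].
  rewrite sumr_const cardC1 card_ord -[_ *+ m.-1]mulr_natl -subn1.
  by rewrite natrB ?(leq_trans _ m_ge2).
have frac_le :
    (\sum_(h < m | h != i) gram A i h) / (3 / 2 * m%:R * e) <= 1 - m%:R^-1.
  rewrite ler_pdivrMr //.
  have -> : (1 - m%:R^-1) * (3 / 2 * m%:R * e) = (m%:R - 1) * (3 / 2 * e).
    by field; rewrite gt_eqF.
  exact: sum_le.
have -> : 1 / (3 * m%:R) = m%:R^-1 / 3 :> R by field; rewrite gt_eqF.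
have : 0 < m%:R^-1 :> R by rewrite invr_gt0.
lra.
Qed.

End Qmat.

Theorem mainTheorem8 (R : realType) (n m : nat) (p : R) (A : 'M[R]_(n, m)) :
  (0 < n)%N -> (2 <= m)%N ->
  0 < p -> p <= 1 ->
  (forall i j, A i j = 0 \/ A i j = 1) ->
  eventA p A ->
  let Q := Qmat p A in
  [/\ symmetric_mx Q, stochastic Q,
      reversible (fun _ => 1 / m%:R) Q,
      (exists s, eigvals_sorted Q s) &
      (forall s, eigvals_sorted Q s -> 1 / 3 <= spectral_gap_of s)].
Proof.
move=> n_gt0 m_ge2 p_gt0 _ _ HA Q.
have Qtr : Q^T = Q := Qmat_tr _ _.
have QC i j : Q i j = Q j i by rewrite -{1}Qtr mxE.
have Qrow i : \sum_j Q i j = 1 := Qmat_row_sum _ _ i.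
have Qcol j : \sum_i Q i j = 1 by rewrite -(Qrow j); apply: eq_bigr => i _; apply: QC.
have Qge := Qmat_ge n_gt0 m_ge2 p_gt0 HA.
have m_gt0 : 0 < m%:R :> R by rewrite ltr0n (leq_trans _ m_ge2).
split.
- exact: Qtr.
- split=> // i j; apply: le_trans (Qge i j).
  by rewrite divr_ge0 // mulr_ge0 // ltW.
- by move=> i j; rewrite QC.
- exact: sym_eigvals_sorted.
- move=> s Qs; have := doubly_stochastic_spectral_gap_ge m_ge2 Qrow Qcol Qge _ Qs.
  have -> : m%:R * (1 / (3 * m%:R)) = 1 / 3 :> R by field; rewrite gt_eqF.
  by apply; rewrite divr_gt0 // mulr_gt0.
Qed.
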